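(* Let $X$ be a Tychonoff space and $\mathcal{P}$ an ideal of closed subsets of $X$. If $X$ is a $P$-space (every $G_\delta$-subset of $X$ is open), then $C(X)_\mathcal{P}$ is a regular ring, i.e. for every $f\in C(X)_\mathcal{P}$ there is $g\in C(X)_\mathcal{P}$ with $f=f^2g$.
   Context: An ideal of closed subsets of $X$ is a family $\mathcal{P}$ of closed subsets closed under finite unions and under passing to closed subsets. $D_f$ is the set of discontinuity points of $f\in\mathbb{R}^X$; $C(X)_\mathcal{P}=\{f\in\mathbb{R}^X\colon\overline{D_f}\in\mathcal{P}\}$ with pointwise operations. (A space with $C(X)_\mathcal{P}$ regular is called a $\mathcal{P}P$-space.) *)

From HB Require Import structures.
From mathcomp Require Import all_boot all_order all_algebra.
From mathcomp Require Import all_classical all_reals all_analysis.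
Set Implicit Arguments. Unset Strict Implicit. Unset Printing Implicit Defensive.
Import Order.TTheory GRing.Theory Num.Theory.
Import numFieldNormedType.Exports.
Local Open Scope classical_set_scope.
Local Open Scope ring_scope.

Definition tychonoff_space (R : realType) (X : topologicalType) : Prop :=
  hausdorff_space X /\
  forall (B : set X) (a : X), closed B -> ~ B a ->
    exists f : X -> R, continuous f /\ f a = 0 /\ (forall b, B b -> f b = 1).

Definition closed_ideal (X : topologicalType) (P : set (set X)) : Prop :=
  (forall A, P A -> closed A) /\
  (forall A B, P A -> P B -> P (A `|` B)) /\
  (forall A B, P A -> closed B -> B `<=` A -> P B).

Definition P_space (X : topologicalType) : Prop :=
  forall U : nat -> set X, (forall n, open (U n)) -> open (\bigcap_n U n).

Definition discont (R : realType) (X : topologicalType) (f : X -> R) : set X :=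
  [set x | ~ {for x, continuous f}].

Definition CP (R : realType) (X : topologicalType) (P : set (set X)) : set (X -> R) :=
  [set f | P (closure (discont f))].

From HB Require Import structures.
From mathcomp Require Import all_boot all_order all_algebra.
From mathcomp Require Import all_classical all_reals all_analysis.
Import Order.TTheory GRing.Theory Num.Theory.
Import numFieldNormedType.Exports.
Local Open Scope classical_set_scope.
Local Open Scope ring_scope.

(* In a P-space the zero set of a function continuous at a zero x is a
   countable intersection of neighbourhoods of x, hence itself a neighbourhood
   of x.  So the pointwise inverse g := f^-1 (with 0^-1 = 0) is locally zero
   around every zero of f at which f is continuous, and continuous wherever f
   is continuous and nonzero: D_g is contained in D_f, hence the closure of D_g
   lies in the ideal, and f = f^2 g holds pointwise. *)

Lemma P_space_nbhs_bigcap {X : topologicalType} {x : X} {A : nat -> set X} :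
  P_space X -> (forall n, nbhs x (A n)) -> nbhs x (\bigcap_n A n).
Proof.
move=> PX nA; have /choice [B hB] : forall n, exists B : set X,
    open_nbhs x B /\ B `<=` A n.
  by move=> n; have := nA n; rewrite nbhsE => -[B ? ?]; exists B.
have oB : open (\bigcap_n B n) by apply: PX => n; case: (hB n) => -[].
have Bx : (\bigcap_n B n) x by move=> n _; case: (hB n) => -[].
apply: (filterS _ (open_nbhs_nbhs (conj oB Bx))) => y By n _.
by apply: (hB n).2; exact: By.
Qed.

Lemma P_space_near_zero {R : realType} {X : topologicalType} {f : X -> R}
    {x : X} :
  P_space X -> {for x, continuous f} -> f x = 0 -> \forall y \near x, f y = 0.
Proof.
move=> PX cf fx0.
have small n : nbhs x [set y | `|f y| < n.+1%:R^-1].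
  have e0 : 0 < (n.+1%:R : R)^-1 by rewrite invr_gt0 ltr0Sn.
  apply: (filterS _ (@cvgr_dist_lt _ _ _ (nbhs x) _ f (f x) cf _ e0)) => y /=.
  by rewrite fx0 sub0r normrN.
apply: (filterS _ (P_space_nbhs_bigcap PX small)) => y fy_small.
apply/eqP/negPn/negP => fy0; have fy_pos : 0 < `|f y| by rewrite normr_gt0.
have [k] := ltr_add_invr fy_pos; rewrite add0r.
by move=> /(lt_trans (fy_small k I)); rewrite ltxx.
Qed.

Lemma discont_inv {R : realType} {X : topologicalType} {f : X -> R} :
  P_space X -> discont (fun x => (f x)^-1) `<=` discont f.
Proof.
move=> PX x /= ncinv; apply: contra_not ncinv => cf.
have [fx0|fx0] := eqVneq (f x) 0; last exact: cvgV.
move=> A /=; rewrite fx0 invr0 => A0.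
apply: (filterS _ (P_space_near_zero PX cf fx0)) => y /= fy0.
by rewrite fy0 invr0; exact: nbhs_singleton.
Qed.

Lemma CP_discont_sub {R : realType} {X : topologicalType} {P : set (set X)}
    {f g : X -> R} :
  closed_ideal P -> discont g `<=` discont f -> CP P f -> CP P g.
Proof.
move=> [_ [_ Pdown]] Dgf Pf; apply: (Pdown _ _ Pf); first exact: closed_closure.
exact: closureS.
Qed.

Lemma sqr_mulV (F : fieldType) (x : F) : x ^+ 2 * x^-1 = x.
Proof.
have [->|x0] := eqVneq x 0; first by rewrite invr0 mulr0.
by rewrite expr2 mulfK.
Qed.

Theorem mainTheorem13 (R : realType) (X : topologicalType) (P : set (set X)) :
  tychonoff_space R X -> closed_ideal P -> P_space X ->
  forall f : X -> R, CP P f ->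
    exists g : X -> R, CP P g /\ (forall x, f x = f x ^+ 2 * g x).
Proof.
move=> _ PI PX f Pf; exists (fun x => (f x)^-1); split.
  exact: CP_discont_sub PI (discont_inv PX) Pf.
by move=> x; rewrite sqr_mulV.
Qed.
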